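(* Let $s$ be a sequence of positive integers. If $L_1,L_2\subseteq S_s$ are zig-zag languages, then $L_1\cap L_2$ and $L_1\cup L_2$ are zig-zag languages.
   Context: For a sequence $s=(s_1,\dots,s_m)$ of positive integers, an $s$-word is a word with exactly $s_i$ copies of $i$ for each $i\in[m]$; $S_s$ is the set of $s$-words. Parent operation: $p(s)=(s_1,\dots,s_{m-1},s_m-1)$ if $s_m>1$ and $p(s)=(s_1,\dots,s_{m-1})$ if $s_m=1$; for an $s$-word $w$, $p(w)$ deletes the rightmost copy of $m$; $p(L)=\{p(w):w\in L\}$. Zig-zag language (recursive on $n=\sum s_i$): for the empty sequence the only zig-zag language is $\{\varepsilon\}$. For $n\ge1$, $L\subseteq S_s$ is zig-zag if $p(L)$ is a zig-zag language of $p(s)$-words and for every $w'\in p(L)$ both of the following lie in $L$: (a) $w'm$, and (b) $mw'$ if $s_m=1$, or, if $s_m>1$, the word obtained by inserting $m$ immediately next to the rightmost $m$ of $w'$. *)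

(* Words are sequences of letters 1..m (nat). *)
From mathcomp Require Import all_boot.
Set Implicit Arguments. Unset Strict Implicit. Unset Printing Implicit Defensive.

Definition language := seq nat -> Prop.

Definition is_sword (s : seq nat) (w : seq nat) : bool :=
  all (fun x => (0 < x) && (x <= size s)) w &&
  all (fun i => count_mem i.+1 w == nth 0 s i) (iota 0 (size s)).

Definition pseq (s : seq nat) : seq nat :=
  let sm := last 0 s in
  if 1 < sm then rcons (take (size s).-1 s) sm.-1 else take (size s).-1 s.

Definition pword (m : nat) (w : seq nat) : seq nat := rev (rem m (rev w)).

Definition plang (m : nat) (L : language) : language :=
  fun w' => exists w, L w /\ w' = pword m w.

Definition ins_rightmost (m : nat) (w : seq nat) : seq nat :=
  let u := rev w in
  rev (take (index m u) u ++ m :: drop (index m u) u).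

(* zig-zag languages, recursion on n = sum s (fuel) *)
Fixpoint zigzag_n (n : nat) (s : seq nat) (L : language) : Prop :=
  match n with
  | 0 => s = [::] /\ (forall w, L w <-> w = [::])
  | n'.+1 =>
      let m := size s in
      let sm := last 0 s in
      (forall w, L w -> is_sword s w) /\
      zigzag_n n' (pseq s) (plang m L) /\
      (forall w', plang m L w' ->
         L (rcons w' m) /\
         L (if sm == 1 then m :: w' else ins_rightmost m w'))
  end.

Definition zigzag (s : seq nat) (L : language) : Prop := zigzag_n (sumn s) s L.

From mathcomp Require Import all_boot.

Set Implicit Arguments.
Unset Strict Implicit.

(* Taking parents commutes with union outright, and with intersection for
   zig-zag languages: if w' is a parent word in both L1 and L2 then w'm lies
   in both, so w' is a parent of a word of L1 /\ L2.  Both closure conditions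
   (a) and (b) are pointwise in the parent language, so induction on n = sum s
   closes the argument. *)

Definition langI (L1 L2 : language) : language := fun w => L1 w /\ L2 w.
Definition langU (L1 L2 : language) : language := fun w => L1 w \/ L2 w.

Lemma plang_ext {m} (L L' : language) :
  (forall w, L w <-> L' w) -> forall w, plang m L w <-> plang m L' w.
Proof. by move=> E w; split=> -[x [/E Lx ->]]; exists x. Qed.

Lemma zigzag_n_ext n s (L L' : language) :
  (forall w, L w <-> L' w) -> zigzag_n n s L -> zigzag_n n s L'.
Proof.
elim: n s L L' => [|n IH] s L L' E /=.
  by move=> [-> L_eps]; split=> // w; split=> [/E/L_eps|/L_eps/E].
move=> [L_sword [zz_parent L_closed]]; split; first by move=> w /E /L_sword.
split; first exact: IH _ _ _ (plang_ext E) zz_parent.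
by move=> w /(plang_ext E) /L_closed [Lw1 Lw2]; split; apply/E.
Qed.

Lemma pword_rcons m w : pword m (rcons w m) = w.
Proof. by rewrite /pword rev_rcons /= eqxx revK. Qed.

Lemma plangU m (L1 L2 : language) w :
  plang m (langU L1 L2) w <-> langU (plang m L1) (plang m L2) w.
Proof.
split; first by move=> [x [[Lx|Lx] ->]]; [left|right]; exists x.
by move=> [] [x [Lx ->]]; exists x; split=> //; [left|right].
Qed.

Lemma plangI m (L1 L2 : language) :
  (forall w, plang m L1 w -> L1 (rcons w m)) ->
  (forall w, plang m L2 w -> L2 (rcons w m)) ->
  forall w, plang m (langI L1 L2) w <-> langI (plang m L1) (plang m L2) w.
Proof.
move=> L1_rcons L2_rcons w; split; first by move=> [x [[L1x L2x] ->]]; split; exists x.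
move=> [/L1_rcons L1w /L2_rcons L2w]; exists (rcons w m).
by rewrite pword_rcons.
Qed.

Lemma zigzag_nU n s (L1 L2 : language) :
  zigzag_n n s L1 -> zigzag_n n s L2 -> zigzag_n n s (langU L1 L2).
Proof.
elim: n s L1 L2 => [|n IH] s L1 L2 /=.
  move=> [-> L1_eps] [_ L2_eps]; split=> // w.
  by have := L1_eps w; have := L2_eps w; rewrite /langU; tauto.
move=> [L1_sword [zz1 L1_closed]] [L2_sword [zz2 L2_closed]].
split; first by move=> w [/L1_sword|/L2_sword].
split; first exact: zigzag_n_ext (fun w => iff_sym (plangU _ _ _ w)) (IH _ _ _ zz1 zz2).
move=> w /plangU [/L1_closed [La Lb]|/L2_closed [La Lb]]; split; by [left|right].
Qed.

Lemma zigzag_nI n s (L1 L2 : language) :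
  zigzag_n n s L1 -> zigzag_n n s L2 -> zigzag_n n s (langI L1 L2).
Proof.
elim: n s L1 L2 => [|n IH] s L1 L2 /=.
  move=> [-> L1_eps] [_ L2_eps]; split=> // w.
  by have := L1_eps w; have := L2_eps w; rewrite /langI; tauto.
move=> [L1_sword [zz1 L1_closed]] [L2_sword [zz2 L2_closed]].
have parentI := plangI (fun w pw => (L1_closed w pw).1) (fun w pw => (L2_closed w pw).1).
split; first by move=> w [/L1_sword].
split; first exact: zigzag_n_ext (fun w => iff_sym (parentI w)) (IH _ _ _ zz1 zz2).
by move=> w /parentI [/L1_closed [L1a L1b] /L2_closed [L2a L2b]].
Qed.

Theorem mainTheorem5 (s : seq nat) (L1 L2 : language) :
  all (fun x => 0 < x) s ->
  zigzag s L1 -> zigzag s L2 ->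
  zigzag s (fun w => L1 w /\ L2 w) /\ zigzag s (fun w => L1 w \/ L2 w).
Proof. by move=> _ zz1 zz2; split; [apply: zigzag_nI | apply: zigzag_nU]. Qed.
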